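(* For every indexed forest $F$ and every noncrossing permutation $\sigma$, the evaluation $\mathrm{ev}_\sigma(\mathfrak P_F)$ is Graham-positive, i.e. lies in $\mathbb Z_{\ge0}[t_2-t_1,t_3-t_2,\dots]$.
   Context: $\mathbf x=(x_1,x_2,\dots)$, $\mathbf t=(t_1,t_2,\dots)$; for $\sigma\in S_n$ (regarded as fixing integers $>n$), $\mathrm{ev}_\sigma f=f(t_{\sigma(1)},t_{\sigma(2)},\dots;\mathbf t)$. A set partition of $[n]$ is noncrossing if there are no distinct blocks $P,Q$ with $a,b\in P$, $c,d\in Q$, $a<c<b<d$; the associated noncrossing permutation acts on each block $\{a_1<\dots<a_p\}$ by $a_j\mapsto a_{j-1}$ ($j\ge2$), $a_1\mapsto a_p$. Indexed forests: sequences $F=(T_1,T_2,\dots)$ of binary plane trees (each node a leaf or an internal node with ordered left/right children), all but finitely many one-node trees; leaves identified with $\mathbb N$ left to right; $\emptyset$ has no internal nodes; $\rho_F(v)$ is the leaf reached from internal node $v$ by going repeatedly to left children; terminal: both children leaves; $\mathrm{Qdes}(F)=\{\rho_F(v):v\text{ terminal}\}$; $F/i$ deletes the terminal node with $\rho_F(v)=i$ (replacing it and its leaves by one leaf, relabeling). Double forest polynomials: $R_i^-f=f(x_1,\dots,x_{i-1},t_i,x_i,\dots;\mathbf t)$, $R_i^+f=f(x_1,\dots,x_i,t_i,x_{i+1},\dots;\mathbf t)$, $E_if=(R_i^+f-R_i^-f)/(x_i-t_i)$; $\mathfrak P_F$ is the unique homogeneous family ($\deg x_i=\deg t_i=1$)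 with $\mathfrak P_F(\mathbf t;\mathbf t)=\delta_{F,\emptyset}$ and $E_i\mathfrak P_F=\mathfrak P_{F/i}(\mathbf x;\widehat{\mathbf t}_i)$ if $i\in\mathrm{Qdes}(F)$, else $0$, $\widehat{\mathbf t}_i=(t_1,\dots,t_{i-1},t_{i+1},\dots)$. *)

From HB Require Import structures.
From mathcomp Require Import all_boot all_order all_algebra all_fingroup.
From mathcomp Require Import finmap.
From mathcomp.multinomials Require Import monalg.

Set Implicit Arguments.
Unset Strict Implicit.
Unset Printing Implicit Defensive.

Import GRing.Theory Num.Theory.
Local Open Scope ring_scope.

(* Conventions: everything is 0-based.  The Rocq variable index k      *)
(* stands for the paper's index k+1: X k = x_{k+1}, T k = t_{k+1},     *)
(* leaf k = paper's leaf k+1, and a permutation of 'I_n is a           *)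
(* permutation of [n] = {1..n}.                                        *)

(* Variables: inl k = x_{k+1}, inr k = t_{k+1}. *)
Definition var := (nat + nat)%type.

Definition xtpoly := {malg int[{cmonom var}]}.

Definition X (k : nat) : xtpoly := << @ucm var (inl k) >>.
Definition T (k : nat) : xtpoly := << @ucm var (inr k) >>.

Definition msubst {V : choiceType} (h : V -> xtpoly)
    (p : {malg int[{cmonom V}]}) : xtpoly :=
  \sum_(m <- msupp p)
     ((p@_m)%:MP : xtpoly) * \prod_(v <- finsupp m) h v ^+ m v.

Definition homogeneous (f : xtpoly) : Prop :=
  exists d : nat, forall m, m \in msupp f -> mdeg m = d.

(* R_i^- f = f(x_1,..,x_{i-1}, t_i, x_i, ...; t) *)
Definition Rm (i : nat) (f : xtpoly) : xtpoly :=
  msubst (fun v : var => match v with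
                   | inl j => if (j < i)%N then X j else if (j == i)%N then T i
                              else X j.-1
                   | inr j => T j end) f.

(* R_i^+ f = f(x_1,..,x_i, t_i, x_{i+1}, ...; t) *)
Definition Rp (i : nat) (f : xtpoly) : xtpoly :=
  msubst (fun v : var => match v with
                   | inl j => if (j <= i)%N then X j else if (j == i.+1)%N then T i
                              else X j.-1
                   | inr j => T j end) f.

(* E_i f = g  means  g = (R_i^+ f - R_i^- f) / (x_i - t_i) (exact division
   in the integral domain xtpoly) *)
Definition E_is (i : nat) (f g : xtpoly) : Prop :=
  (X i - T i) * g = Rp i f - Rm i f.

(* f(x; \hat t_i), \hat t_i = (t_1,..,t_{i-1}, t_{i+1}, ...) *)
Definition hat_t (i : nat) (f : xtpoly) : xtpoly :=
  msubst (fun v : var => match v with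
                   | inl j => X j
                   | inr j => if (j < i)%N then T j else T j.+1 end) f.

Definition at_tt (f : xtpoly) : xtpoly :=
  msubst (fun v : var => match v with inl j => T j | inr j => T j end) f.

Inductive tree : Type := Leaf | Node of tree & tree.

Fixpoint nleaves (t : tree) : nat :=
  match t with Leaf => 1%N | Node l r => (nleaves l + nleaves r)%N end.

Fixpoint ninternal (t : tree) : nat :=
  match t with Leaf => 0%N | Node l r => (ninternal l + ninternal r).+1 end.

(* An indexed forest (T_1, T_2, ...) is represented by a finite list
   [T_1; ...; T_m]; all the trees after T_m are one-node trees (Leaf).
   Trailing Leafs in the list are allowed (they represent the same forest). *)
Definition forest := seq tree.

(* rho-values of terminal nodes of a tree whose leftmost leaf is labelled a *)
Fixpoint tqdes (a : nat) (t : tree) : seq nat :=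
  match t with
  | Leaf => [::]
  | Node Leaf Leaf => [:: a]
  | Node l r => tqdes a l ++ tqdes (a + nleaves l) r
  end.

Fixpoint fqdes (a : nat) (F : forest) : seq nat :=
  match F with
  | [::] => [::]
  | t :: F' => tqdes a t ++ fqdes (a + nleaves t) F'
  end.

Definition Qdes (F : forest) : seq nat := fqdes 0 F.

(* delete the terminal node with rho = i (labels are positional, so the
   relabelling is automatic) *)
Fixpoint tcontract (i a : nat) (t : tree) : tree :=
  match t with
  | Leaf => Leaf
  | Node Leaf Leaf => if a == i then Leaf else Node Leaf Leaf
  | Node l r => Node (tcontract i a l) (tcontract i (a + nleaves l) r)
  end.

Fixpoint fcontract (i a : nat) (F : forest) : forest :=
  match F with
  | [::] => [::]
  | t :: F' => tcontract i a t :: fcontract i (a + nleaves t) F'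
  end.

Definition contract (F : forest) (i : nat) : forest := fcontract i 0 F.

Definition is_empty_forest (F : forest) : bool :=
  all (fun t => ninternal t == 0%N) F.

Definition is_double_forest_family (P : forest -> xtpoly) : Prop :=
  [/\ forall F, homogeneous (P F),
      forall F, at_tt (P F) = (if is_empty_forest F then 1 else 0)
    & forall F i, E_is i (P F)
                    (if i \in Qdes F then hat_t i (P (contract F i)) else 0)].

Definition noncrossing {n : nat} (Q : {set {set 'I_n}}) : Prop :=
  forall B C, B \in Q -> C \in Q -> B != C ->
  ~ (exists a b c d, [/\ a \in B, b \in B, c \in C & d \in C] /\
                     [/\ a < c, c < b & b < d]%N).

(* the associated permutation: on a block {a_1 < ... < a_p},
   a_j |-> a_{j-1} (j >= 2), a_1 |-> a_p *)
Definition ncperm_val {n : nat} (Q : {set {set 'I_n}}) (x : 'I_n) : nat :=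
  let s := sort leq [seq val y | y <- enum (pblock Q x)] in
  let j := index (val x) s in
  if j == 0%N then last 0%N s else nth 0%N s j.-1.

Definition noncrossing_perm {n : nat} (s : {perm 'I_n}) : Prop :=
  exists Q : {set {set 'I_n}},
    [/\ partition Q [set: 'I_n], noncrossing Q &
        forall x, val (s x) = ncperm_val Q x].

Definition perm_nat {n : nat} (s : {perm 'I_n}) (j : nat) : nat :=
  match @insub nat (fun k => k < n)%N 'I_n j with
  | Some k => val (s k)
  | None => j
  end.

Definition ev {n : nat} (s : {perm 'I_n}) (f : xtpoly) : xtpoly :=
  msubst (fun v : var => match v with
                   | inl j => T (perm_nat s j)
                   | inr j => T j end) f.

Definition graham_positive (f : xtpoly) : Prop :=
  exists q : {malg int[{cmonom nat}]},
    (forall m, 0 <= q@_m) /\ msubst (fun k => T k.+1 - T k) q = f.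

(* Write ev_c f for f evaluated at x_j = t_(c j).  Evaluating the defining
   relation (x_i - t_i) E_i P_F = R_i^+ P_F - R_i^- P_F at x = t_c gives
     ev_(c+) P_F - ev_(c-) P_F = (t_(c i) - t_i) ev_c (E_i P_F),
   where c+ and c- insert the value i at position i+1, resp. i.  A noncrossing
   permutation s other than the identity has an adjacent position i with
   s (i+1) = i < s i, or with s i = i > s (i+1).  Taking for c the sequence s
   with position i+1, resp. i, removed, the relation writes ev_s P_F as
   ev_(s o (i i+1)) P_F plus t_b - t_a (a < b) times ev_c (E_i P_F), and the
   latter is, up to a monotone relabelling of the t's, an evaluation of
   P_(F/i) at the noncrossing permutation of [n-1] obtained by deleting i
   from its cycle.  Finally s o (i i+1) is again noncrossing (i is split off
   its block, resp. joins the block of i+1) with a larger sum_j j * s j, so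
   induction on n and on this sum ends at ev_id P_F = P_F(t; t), which is
   0 or 1. *)

From mathcomp Require Import all_boot all_order all_algebra all_fingroup.
From HB Require Import structures.
From mathcomp Require Import finmap.
From mathcomp.multinomials Require Import monalg.
From mathcomp Require Import zify.

Set Implicit Arguments.
Unset Strict Implicit.
Unset Printing Implicit Defensive.

(** * Noncrossing structures on [0, n) *)

(* [e] is the block relation of a noncrossing partition of [0, n) and [s] its
   noncrossing permutation, characterised locally: if [s x < x] then [s x] is
   the element of the block just below [x]; otherwise [x] is the least and
   [s x] the largest element of the block. *)
Record nc_structure (n : nat) (e : rel nat) (s : nat -> nat) : Prop := {
  ncs_dom : forall x y, e x y -> x < n;
  ncs_refl : forall x, x < n -> e x x;
  ncs_sym : forall x y, e x y -> e y x;
  ncs_trans : forall x y z, e x y -> e y z -> e x z;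
  ncs_noncrossing : forall a b c d, e a b -> e c d -> a < c -> c < b -> b < d -> e a c;
  ncs_fix : forall x, n <= x -> s x = x;
  ncs_block : forall x, x < n -> e x (s x);
  ncs_prev : forall x y, x < n -> s x < x -> e x y -> s x < y -> y < x -> False;
  ncs_wrap : forall x y, x < n -> x <= s x -> e x y -> x <= y <= s x }.

Section NCStructureTheory.
Variables (n : nat) (e : rel nat) (s : nat -> nat).
Hypothesis H : nc_structure n e s.

Lemma ncs_ltn x : x < n -> s x < n.
Proof. by move=> xn; apply: (ncs_dom H (ncs_sym H (ncs_block H xn))). Qed.

Lemma ncs_moved_ltn x : s x != x -> x < n.
Proof. by case: (ltnP x n) => // /(ncs_fix H) ->; rewrite eqxx. Qed.

Lemma ncs_inj : injective s.
Proof.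
move=> x y exy.
case: (ltnP x n) => xn; case: (ltnP y n) => yn.
- have exy' : e x y.
    apply: (ncs_trans H (ncs_block H xn)); rewrite exy.
    exact: (ncs_sym H (ncs_block H yn)).
  have eyx := ncs_sym H exy'.
  case: (ltnP (s x) x) => hx; case: (ltnP (s y) y) => hy.
  + case: (ltngtP x y) => // c; exfalso.
    * by apply: (ncs_prev H yn hy eyx); lia.
    * by apply: (ncs_prev H xn hx exy'); lia.
  + have := ncs_wrap H yn hy eyx; lia.
  + have := ncs_wrap H xn hx exy'; lia.
  + have := ncs_wrap H xn hx exy'; have := ncs_wrap H yn hy eyx; lia.
- have := ncs_ltn xn; rewrite exy (ncs_fix H yn); lia.
- have := ncs_ltn yn; rewrite -exy (ncs_fix H xn); lia.
- by rewrite -(ncs_fix H xn) -(ncs_fix H yn).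
Qed.

Lemma ncs_descent_of_lower x y : x < n -> e x y -> y < x -> s x < x.
Proof.
move=> xn exy yx; case: (ltnP (s x) x) => // h.
have := ncs_wrap H xn h exy; lia.
Qed.

(* If [k < s k], then [s k] is a descent (its block contains [k]), so
   [m <= s k]; by noncrossing, [k] then lies in the block of [m] strictly
   between [s m] and [m]. *)
Lemma ncs_fixed_below_least_descent m :
  s m < m -> (forall k, s k < k -> m <= k) -> forall k, s m < k < m -> s k = k.
Proof.
move=> hm hmin k /andP[ak km].
have mn : m < n by apply: ncs_moved_ltn; rewrite neq_ltn hm.
have ema : e m (s m) := ncs_block H mn.
have kn : k < n by lia.
have ks : k <= s k by case: (ltnP (s k) k) => // /hmin; lia.
have [ksk|//] : k < s k \/ s k = k by lia.
exfalso.
have ekz : e k (s k) := ncs_block H kn.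
case: (ltnP (s (s k)) (s k)) => hz.
- have mz : m <= s k := hmin _ hz.
  have emk : e m k.
    have [c|c] : m < s k \/ m = s k by lia.
      exact (ncs_trans H ema (ncs_noncrossing H (ncs_sym H ema) ekz ak km c)).
    by rewrite c; exact: (ncs_sym H ekz).
  by apply: (ncs_prev H mn hm emk).
- have := ncs_wrap H (ncs_ltn kn) hz (ncs_sym H ekz); lia.
Qed.

Lemma ncs_adjacent_descent :
  (exists x, s x != x) ->
  exists i, i.+1 < n /\ ((s i.+1 = i /\ i < s i) \/ (s i = i /\ s i.+1 < i)).
Proof.
move=> [x hx].
have ex : exists m, s m < m.
  case: (ltngtP (s x) x) => h; first by exists x.
  - have xn := ncs_moved_ltn hx.
    exists (s x); apply: (ncs_descent_of_lower (ncs_ltn xn) _ h).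
    exact: (ncs_sym H (ncs_block H xn)).
  - by rewrite h eqxx in hx.
case: (ex_minnP ex) => m hm hmin.
have mn : m < n by apply: ncs_moved_ltn; rewrite neq_ltn hm.
have kfix := ncs_fixed_below_least_descent hm hmin.
case: (ltnP (s m).+1 m) => am.
- exists m.-1; split; first lia.
  right; split; first by apply: kfix; lia.
  by rewrite prednK; lia.
- exists (s m); have am' : (s m).+1 = m by lia.
  split; first by rewrite am'.
  left; split; first by rewrite am'.
  have asa : s m <= s (s m) by case: (ltnP (s (s m)) (s m)) => // /hmin; lia.
  have [//|c] : s m < s (s m) \/ s m = s (s m) by lia.
  have := ncs_wrap H (ncs_ltn mn) asa (ncs_sym H (ncs_block H mn)); lia.
Qed.

End NCStructureTheory.

Definition adjswap (i x : nat) : nat :=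
  if x == i then i.+1 else if x == i.+1 then i else x.

Definition isolate_rel (i : nat) (e : rel nat) : rel nat :=
  fun x y => ((x == i) && (y == i)) || [&& x != i, y != i & e x y].

Lemma nc_structure_isolate n e s i : nc_structure n e s -> i.+1 < n ->
  s i.+1 = i -> i < s i -> nc_structure n (isolate_rel i e) (s \o adjswap i).
Proof.
move=> H i1n si1 isi.
have ein : e i.+1 i by rewrite -{2}si1; apply: (ncs_block H).
have imin y : e i y -> i <= y <= s i by apply: (ncs_wrap H) => //; lia.
have isoP x y : isolate_rel i e x y -> (x = i /\ y = i) \/ [/\ x <> i, y <> i & e x y].
  by move=> /orP [/andP [/eqP -> /eqP ->]|/and3P [/eqP ? /eqP ? ?]]; [left | right].
have isoI x y : x <> i -> y <> i -> e x y -> isolate_rel i e x y.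
  by move=> /eqP xi /eqP yi exy; apply/orP; right; apply/and3P.
have isoii : isolate_rel i e i i by rewrite /isolate_rel eqxx.
split.
- by move=> x y /isoP [[-> _]|[_ _ /(ncs_dom H)]] //; lia.
- move=> x xn; case: (eqVneq x i) => [->|/eqP xi] //.
  by apply: isoI => //; apply: (ncs_refl H).
- move=> x y /isoP [[-> ->]|[xi yi exy]] //; apply: isoI => //; exact: (ncs_sym H).
- move=> x y z /isoP [[-> ->]|[xi yi exy]] // /isoP [[? ->]|[_ zi eyz]] //.
  by apply: isoI => //; exact: (ncs_trans H exy eyz).
- move=> a b c d /isoP [[-> ->]|[ai bi eab]]; first lia.
  move=> /isoP [[-> ->]|[ci di ecd]]; first lia.
  by move=> ac cb bd; apply: isoI => //; exact: (ncs_noncrossing H eab ecd ac cb bd).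
- move=> x xn; rewrite /= /adjswap ifN; last by apply/eqP; lia.
  by rewrite ifN; [exact: (ncs_fix H) | apply/eqP; lia].
- move=> x xn; rewrite /= /adjswap; case: (eqVneq x i) => [->|xi]; first by rewrite si1.
  case: (eqVneq x i.+1) => [->|xi1].
    apply: isoI; [lia | lia | exact: (ncs_trans H ein (ncs_block H (ltnW i1n)))].
  have sxi : s x <> i by rewrite -si1 => /(ncs_inj H) /eqP; rewrite (negbTE xi1).
  by apply: isoI => //; [exact/eqP | exact: (ncs_block H)].
- move=> x y xn; rewrite /= /adjswap; case: (eqVneq x i) => [->|xi].
    by rewrite si1; lia.
  case: (eqVneq x i.+1) => [->|xi1]; first lia.
  move=> h /isoP [[hx ->]|[_ yi exy]]; first by rewrite hx eqxx in xi.
  exact: (ncs_prev H xn h exy).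
- move=> x y xn; rewrite /= /adjswap; case: (eqVneq x i) => [->|xi].
    by rewrite si1 => _ /isoP [[_ ->]|[]] //; lia.
  case: (eqVneq x i.+1) => [->|xi1].
    move=> _ /isoP [[? ->]|[_ yi ey]]; first lia.
    have := imin y (ncs_trans H (ncs_sym H ein) ey); lia.
  move=> h /isoP [[hx ->]|[_ yi exy]]; first by rewrite hx eqxx in xi.
  exact: (ncs_wrap H xn h exy).
Qed.

Definition to_succ (i x : nat) : nat := if x == i then i.+1 else x.

Definition join_rel (i : nat) (e : rel nat) : rel nat :=
  fun x y => e (to_succ i x) (to_succ i y).

Lemma nc_structure_join n e s i : nc_structure n e s -> i.+1 < n ->
  s i = i -> s i.+1 < i -> nc_structure n (join_rel i e) (s \o adjswap i).
Proof.
move=> H i1n sii si1.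
have succE x : x != i -> to_succ i x = x by move=> /negbTE xi; rewrite /to_succ xi.
have succi : to_succ i i = i.+1 by rewrite /to_succ eqxx.
have succ_ge x : x <= to_succ i x by rewrite /to_succ; case: eqP => //; lia.
have succ_mono x y : x < y -> to_succ i x <= to_succ i y.
  by rewrite /to_succ; case: eqP; case: eqP; lia.
have succ_lt x : x < n -> to_succ i x < n by rewrite /to_succ; case: eqP; lia.
split.
- move=> x y /(ncs_dom H); have := succ_ge x; lia.
- by move=> x /succ_lt xn; apply: (ncs_refl H).
- by move=> x y /(ncs_sym H).
- by move=> x y z exy eyz; apply: (ncs_trans H exy eyz).
- move=> a b c d eab ecd ac cb bd.
  move: (succ_mono _ _ ac) (succ_mono _ _ cb) (succ_mono _ _ bd) eab ecd.
  rewrite /join_rel; set a' := to_succ i a; set b' := to_succ i b.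
  set c' := to_succ i c; set d' := to_succ i d => h1 h2 h3 eab ecd.
  have [q|q] : a' = c' \/ a' < c' by lia.
    by rewrite q; apply: (ncs_refl H); apply: (ncs_dom H ecd).
  have [q2|q2] : c' = b' \/ c' < b' by lia.
    by rewrite q2.
  have [q3|q3] : b' = d' \/ b' < d' by lia.
    by rewrite -q3 in ecd; exact: (ncs_trans H eab (ncs_sym H ecd)).
  exact: (ncs_noncrossing H eab ecd q q2 q3).
- move=> x xn; rewrite /= /adjswap ifN; last by apply/eqP; lia.
  by rewrite ifN; [exact: (ncs_fix H) | apply/eqP; lia].
- move=> x xn; rewrite /join_rel /= /adjswap; case: (eqVneq x i) => [->|xi].
    by rewrite succi succE; [exact: (ncs_block H) | apply/eqP; lia].
  case: (eqVneq x i.+1) => [->|xi1].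
    by rewrite sii succi succE; [exact: (ncs_refl H) | apply/eqP; lia].
  have sxi : s x != i by apply: contra_neq xi; rewrite -{1}sii => /(ncs_inj H).
  by rewrite (succE _ xi) (succE _ sxi); exact: (ncs_block H).
- move=> x y xn; rewrite /join_rel /= /adjswap; case: (eqVneq x i) => [->|xi].
    rewrite succi => h ey h1 h2.
    rewrite succE in ey; last by apply/eqP; lia.
    by apply: (ncs_prev H i1n _ ey); lia.
  case: (eqVneq x i.+1) => [->|xi1]; first by rewrite sii; lia.
  rewrite (succE _ xi) => h ey h1 h2.
  case: (eqVneq y i) => [yi|yi].
    rewrite yi succi in ey h1 h2.
    by apply: (ncs_prev H xn h ey); move/eqP: xi1; lia.
  by rewrite (succE _ yi) in ey; exact: (ncs_prev H xn h ey).
- move=> x y xn; rewrite /join_rel /= /adjswap; case: (eqVneq x i) => [->|xi].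
    by rewrite succi; lia.
  case: (eqVneq x i.+1) => [->|xi1]; first by rewrite sii; lia.
  rewrite (succE _ xi) => h ey.
  case: (eqVneq y i) => [yi|yi].
    rewrite yi succi in ey.
    by have := ncs_wrap H xn h ey; move/eqP: xi1; rewrite yi; lia.
  by rewrite (succE _ yi) in ey; exact: (ncs_wrap H xn h ey).
Qed.

Lemma bumpE r x : bump r x = if x < r then x else x.+1.
Proof. by rewrite /bump ltnNge; case: (r <= x). Qed.

Lemma ltn_bump2 r x y : (bump r x < bump r y) = (x < y).
Proof. by rewrite !ltnNge leq_bump2. Qed.

Lemma ltn_unbump r v y : v != r -> (unbump r v < y) = (v < bump r y).
Proof. by move=> vr; rewrite !ltnNge -(leq_bump2 r) unbumpK. Qed.

Definition bypass (r : nat) (s : nat -> nat) (x : nat) : nat :=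
  if s x == r then s r else s x.

Definition delete_perm (r : nat) (s : nat -> nat) (x : nat) : nat :=
  unbump r (bypass r s (bump r x)).

Definition delete_rel (r : nat) (e : rel nat) : rel nat :=
  fun x y => e (bump r x) (bump r y).

Section Delete.
Variables (n : nat) (e : rel nat) (s : nat -> nat) (r : nat).
Hypotheses (H : nc_structure n e s) (rn : r < n).

Lemma ncs_skip y w : y < n -> y != r -> w != r -> e y w -> s y = r ->
  [/\ s r != r, e y (s r), s r < y -> ~ (s r < w < y) & y <= s r -> y <= w <= s r].
Proof.
move=> yn yr wr ew syr.
have eyr : e y r by rewrite -syr; apply: (ncs_block H).
have srr : s r != r by apply: contra_neq yr => srr; apply: (ncs_inj H); rewrite syr srr.
have erw : e r w := ncs_trans H (ncs_sym H eyr) ew.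
have eysr : e y (s r) := ncs_trans H eyr (ncs_block H rn).
split => //.
- move=> h /andP [h1 h2].
  case: (ltnP r y) => ry.
  + have wr' : w < r.
      have : ~ (s y < w < y) by move=> /andP [a b]; apply: (ncs_prev H yn _ ew); lia.
      by move/eqP: wr; rewrite syr; lia.
    case: (ltnP (s r) r) => hr; first by apply: (ncs_prev H rn hr erw).
    by have := ncs_wrap H rn hr erw; lia.
  + have ys : y <= s y by rewrite syr.
    by have := ncs_wrap H yn ys eysr; lia.
- move=> h.
  case: (ltnP r y) => ry.
  + have := ncs_wrap H rn (_ : r <= s r) erw.
    have : ~ (s y < w < y) by move=> /andP [a b]; apply: (ncs_prev H yn _ ew); lia.
    by move/eqP: wr; rewrite syr; lia.
  + have ys : y <= s y by rewrite syr.
    have hw := ncs_wrap H yn ys ew.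
    have hr : s r < r.
      case: (ltnP (s r) r) => // hr.
      by have := ncs_wrap H rn hr (ncs_sym H eyr); move/eqP: yr; lia.
    have : ~ (s r < w < r) by move=> /andP [a b]; apply: (ncs_prev H rn hr erw).
    by move/eqP: wr; rewrite syr in hw; lia.
Qed.

Lemma bypass_spec y w : y < n -> y != r -> w != r -> e y w ->
  let v := bypass r s y in
  [/\ v != r, e y v, v < y -> ~ (v < w < y) & y <= v -> y <= w <= v].
Proof.
move=> yn yr wr ew v; rewrite /v /bypass.
case: (eqVneq (s y) r) => [syr|syr]; first exact: ncs_skip.
split => //; first exact: (ncs_block H).
  by move=> h /andP [h1 h2]; apply: (ncs_prev H yn h ew).
by move=> h; apply: (ncs_wrap H yn h ew).
Qed.

Lemma nc_structure_delete : nc_structure n.-1 (delete_rel r e) (delete_perm r s).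
Proof.
have bump_lt x : x < n.-1 -> bump r x < n by rewrite bumpE; case: (ltnP x r); lia.
have bump_neq x : bump r x != r by rewrite eq_sym neq_bump.
split.
- by move=> x y /(ncs_dom H); rewrite bumpE; case: (ltnP x r); lia.
- by move=> x /bump_lt xn; apply: (ncs_refl H).
- by move=> x y /(ncs_sym H).
- by move=> x y z exy eyz; apply: (ncs_trans H exy eyz).
- move=> a b c d eab ecd ac cb bd.
  by apply: (ncs_noncrossing H eab ecd); rewrite ltn_bump2.
- move=> x xn; have rx : r <= x by lia.
  rewrite /delete_perm /bypass /bump rx add1n (ncs_fix H); last by lia.
  by rewrite ifN /unbump ?ltnS ?rx ?subn1 //; apply/eqP; lia.
- move=> x xn; rewrite /delete_rel /delete_perm.
  have [v1 ev _ _] := bypass_spec (bump_lt _ xn) (bump_neq x) (bump_neq x)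
    (ncs_refl H (bump_lt _ xn)).
  by rewrite unbumpK.
- move=> x y xn; rewrite /delete_rel /delete_perm => h ey h1 h2.
  have [v1 _ hp _] := bypass_spec (bump_lt _ xn) (bump_neq x) (bump_neq y) ey.
  rewrite !(ltn_unbump _ v1) in h h1.
  by apply: hp => //; rewrite h1 ltn_bump2.
- move=> x y xn; rewrite /delete_rel /delete_perm => h ey.
  have [v1 _ _ hm] := bypass_spec (bump_lt _ xn) (bump_neq x) (bump_neq y) ey.
  move: h; rewrite leqNgt (ltn_unbump _ v1) -leqNgt => /hm /andP [h1 h2].
  by rewrite -(leq_bump2 r) h1 leqNgt (ltn_unbump _ v1) -leqNgt.
Qed.

End Delete.

Definition mu (n : nat) (s : nat -> nat) : nat := \sum_(0 <= x < n) x * s x.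

Lemma mu_bound n e s : nc_structure n e s -> mu n s <= n * (n * n).
Proof.
have -> : n * (n * n) = \sum_(0 <= x < n) (n * n) by rewrite sum_nat_const_nat subn0.
move=> H; rewrite /mu.
by rewrite !big_nat; apply: leq_sum => x /andP [_ xn]; have := ncs_ltn H xn; nia.
Qed.

Lemma big_nat_adj (f : nat -> nat) n i : i.+1 < n ->
  \sum_(0 <= x < n) f x =
  \sum_(0 <= x < i) f x + (f i + f i.+1) + \sum_(i.+2 <= x < n) f x.
Proof.
move=> i1n; have adj : \sum_(i <= x < i.+2) f x = f i + f i.+1.
  by rewrite big_ltn // big_nat1.
rewrite (big_cat_nat _ (n := i.+2)) // (big_cat_nat _ (n := i) (p := i.+2)) ?adj //.
exact: leqW.
Qed.

Lemma mu_adjswap n s i : i.+1 < n -> s i.+1 < s i -> mu n s < mu n (s \o adjswap i).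
Proof.
move=> i1n lt_s; rewrite /mu !(big_nat_adj _ i1n).
have swap_out x : x != i -> x != i.+1 -> x * (s \o adjswap i) x = x * s x.
  by move=> /negbTE xi /negbTE xi1; rewrite /= /adjswap xi xi1.
have -> : \sum_(0 <= x < i) x * (s \o adjswap i) x = \sum_(0 <= x < i) x * s x.
  by apply: eq_big_nat => x /andP [_ xi]; apply: swap_out; apply/eqP; lia.
have -> : \sum_(i.+2 <= x < n) x * (s \o adjswap i) x = \sum_(i.+2 <= x < n) x * s x.
  by apply: eq_big_nat => x /andP [xi _]; apply: swap_out; apply/eqP; lia.
rewrite /= /adjswap eqxx ifN ?eqxx; last by apply/eqP; lia.
nia.
Qed.

Definition ins (c : nat -> nat) (k v j : nat) : nat :=
  if j < k then c j else if j == k then v else c j.-1.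

(* Innermost conditionals are split first, so that every case hypothesis is
   arithmetic. *)
Ltac case_ifs_lia :=
  repeat match goal with
  | |- context [if ?b then _ else _] =>
      lazymatch b with
      | context [if _ then _ else _] => fail
      | _ => case: (boolP b) => ?
      end
  end; try (by congr (_ _); lia); try (by exfalso; lia).

Lemma ins_bump (c : nat -> nat) k v : c k = v -> ins (c \o bump k) k v =1 c.
Proof. by move=> <- j; rewrite /ins /= !bumpE; case_ifs_lia. Qed.

Lemma ins_bump_adjswapl (c : nat -> nat) k v : c k.+1 = v ->
  ins (c \o bump k.+1) k v =1 c \o adjswap k.
Proof. by move=> <- j; rewrite /ins /adjswap /= !bumpE; case_ifs_lia. Qed.

Lemma ins_bump_adjswapr (c : nat -> nat) k v : c k = v ->
  ins (c \o bump k) k.+1 v =1 c \o adjswap k.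
Proof. by move=> <- j; rewrite /ins /adjswap /= !bumpE; case_ifs_lia. Qed.

Section DeletePerm.
Variables (s : nat -> nat) (r : nat).
Hypothesis s_inj : injective s.

Lemma bump_delete_perm : bump r \o delete_perm r s =1 bypass r s \o bump r.
Proof.
move=> j; have bump_r : bump r j != r by rewrite eq_sym neq_bump.
have bypass_r : bypass r s (bump r j) != r.
  rewrite /bypass; case: (eqVneq (s (bump r j)) r) => [sr | //].
  by apply: contra_neq bump_r => srr; apply: s_inj; rewrite sr srr.
by rewrite /= /delete_perm unbumpK.
Qed.

Lemma bypass_bump_fixed : s r = r -> bypass r s \o bump r =1 s \o bump r.
Proof.
move=> srr j; rewrite /= /bypass ifN //.
by rewrite -{2}srr (inj_eq s_inj) eq_sym neq_bump.
Qed.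

Lemma bypass_bump_pred : s r.+1 = r -> bypass r s \o bump r =1 s \o bump r.+1.
Proof.
move=> sr1 j; rewrite /= /bypass -{2}sr1 (inj_eq s_inj) !bumpE.
by case_ifs_lia.
Qed.

End DeletePerm.

(** * Noncrossing partitions give noncrossing structures *)

Lemma sorted_nth_ltn (L : seq nat) a b : sorted ltn L -> a < size L -> b < size L ->
  (nth 0 L a < nth 0 L b) = (a < b).
Proof.
by move=> sL aL bL; rewrite -(Order.POrderTheory.lt_sorted_ltn_nth 0 sL aL bL).
Qed.

Lemma sorted_nth_leq (L : seq nat) a b : sorted ltn L -> a < size L -> b < size L ->
  (nth 0 L a <= nth 0 L b) = (a <= b).
Proof.
by move=> sL aL bL; rewrite -(Order.POrderTheory.lt_sorted_leq_nth 0 sL aL bL).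
Qed.

Lemma sorted_cyclic_pred_spec (L : seq nat) (x : nat) : sorted ltn L -> x \in L ->
  let j := index x L in
  let f := if j == 0 then last 0 L else nth 0 L j.-1 in
  [/\ f \in L, f < x -> forall y, y \in L -> ~ (f < y < x) &
      x <= f -> forall y, y \in L -> x <= y <= f].
Proof.
move=> sL xL j f.
have jL : j < size L by rewrite index_mem.
have xj : nth 0 L j = x by rewrite nth_index.
have szL : 0 < size L by apply: leq_ltn_trans jL.
have lastE : last 0 L = nth 0 L (size L).-1.
  by case: (L) => //= a L'; rewrite (nth_last 0).
have nthP y : y \in L -> y = nth 0 L (index y L) /\ index y L < size L.
  by move=> yL; rewrite nth_index // index_mem.
rewrite /f; case: (eqVneq j 0) => [j0|j0].
- split.
  + by rewrite lastE mem_nth // prednK.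
  + by rewrite lastE -xj j0 sorted_nth_ltn //; lia.
  + move=> _ y /nthP [ye yL]; rewrite ye.
    by rewrite lastE -xj j0 !sorted_nth_leq //; lia.
- split.
  + by rewrite mem_nth // (leq_ltn_trans (leq_pred j) jL).
  + move=> _ y /nthP [ye yL]; rewrite ye.
    by rewrite -xj !sorted_nth_ltn //; lia.
  + by rewrite -xj sorted_nth_leq //; lia.
Qed.

Section FromPartition.
Variables (n : nat) (s : {perm 'I_n}) (Q : {set {set 'I_n}}).
Hypotheses (hQ : partition Q [set: 'I_n]) (hnc : noncrossing Q)
  (hs : forall x, val (s x) = ncperm_val Q x).

Definition block_rel : rel nat := fun x y =>
  [exists x' : 'I_n, exists y' : 'I_n,
    [&& val x' == x, val y' == y & y' \in pblock Q x']].

Let tI : trivIset Q := partition_trivIset hQ.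

Let cov x : x \in cover Q.
Proof. by rewrite (cover_partition hQ) inE. Qed.

Lemma block_relP x y : block_rel x y ->
  exists x' y' : 'I_n, [/\ val x' = x, val y' = y & y' \in pblock Q x'].
Proof.
by move=> /existsP [x' /existsP [y' /and3P [/eqP <- /eqP <- h]]]; exists x', y'.
Qed.

Lemma block_rel_ord (x y : 'I_n) : block_rel (val x) (val y) = (y \in pblock Q x).
Proof.
apply/idP/idP => [/block_relP [x' [y' [/val_inj -> /val_inj -> //]]]|h].
by apply/existsP; exists x; apply/existsP; exists y; rewrite !eqxx h.
Qed.

Lemma mem_block_sort (x : 'I_n) (v : nat) :
  (v \in sort leq [seq val y | y <- enum (pblock Q x)]) = block_rel (val x) v.
Proof.
rewrite mem_sort; apply/mapP/idP => [[y yB ->]|/block_relP [x' [y' [/val_inj <- <- h]]]].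
  by rewrite block_rel_ord -(mem_enum (mem (pblock Q x))).
by exists y'; rewrite ?mem_enum.
Qed.

Lemma sorted_block_sort (x : 'I_n) :
  sorted ltn (sort leq [seq val y | y <- enum (pblock Q x)]).
Proof.
rewrite ltn_sorted_uniq_leq sort_uniq (map_inj_uniq val_inj) enum_uniq.
exact: (sort_sorted leq_total).
Qed.

Lemma ncperm_val_spec (x : 'I_n) :
  let v := ncperm_val Q x in
  [/\ block_rel x v, v < x -> forall y, block_rel x y -> ~ (v < y < x) &
      x <= v -> forall y, block_rel x y -> x <= y <= v].
Proof.
have := sorted_cyclic_pred_spec (sorted_block_sort x) (x := val x).
rewrite mem_block_sort block_rel_ord mem_pblock cov => /(_ isT) [h1 h2 h3].
split; first by rewrite -mem_block_sort.
  by move=> lt_v y; rewrite -mem_block_sort; apply: h2.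
by move=> le_v y; rewrite -mem_block_sort; apply: h3.
Qed.

Lemma perm_nat_ord (x : 'I_n) : perm_nat s (val x) = ncperm_val Q x.
Proof. by rewrite /perm_nat valK hs. Qed.

Lemma nc_structure_ncperm : nc_structure n block_rel (perm_nat s).
Proof.
have ordE x (xn : x < n) : x = val (Ordinal xn) by [].
split.
- by move=> x y /block_relP [x' [y' [<- _ _]]]; exact: ltn_ord.
- by move=> x xn; rewrite (ordE x xn) block_rel_ord mem_pblock cov.
- move=> x y /block_relP [x' [y' [<- <- h]]]; rewrite block_rel_ord.
  by rewrite (same_pblock tI h) mem_pblock cov.
- move=> x y z /block_relP [x' [y' [<- <- h1]]].
  move=> /block_relP [y'' [z' [/val_inj hy <- h2]]].
  by subst y''; rewrite block_rel_ord -(same_pblock tI h1).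
- move=> a b c d /block_relP [a' [b' [<- <- hab]]].
  move=> /block_relP [c' [d' [<- <- hcd]]] ac cb bd.
  rewrite block_rel_ord -(eq_pblock c' tI (cov a')).
  apply/negPn/negP => hne.
  apply: (hnc (pblock_mem (cov a')) (pblock_mem (cov c')) hne).
  by exists a', b', c', d'; split => //; split => //; rewrite mem_pblock cov.
- by move=> x xn; rewrite /perm_nat insubF // ltnNge xn.
- move=> x xn; rewrite (ordE x xn) perm_nat_ord.
  by case: (ncperm_val_spec (Ordinal xn)).
- move=> x y xn; rewrite (ordE x xn) perm_nat_ord => lt_v ey h1 h2.
  by case: (ncperm_val_spec (Ordinal xn)) => _ /(_ lt_v y ey) + _; apply; rewrite h1.
- move=> x y xn; rewrite (ordE x xn) perm_nat_ord => le_v ey.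
  by case: (ncperm_val_spec (Ordinal xn)) => _ _ /(_ le_v y ey).
Qed.

End FromPartition.

(** * Substitutions *)

Import GRing.Theory Num.Theory.
Local Open Scope ring_scope.

Section Substitution.
Context {V : choiceType}.
Implicit Types (h : V -> xtpoly) (p : {malg int[{cmonom V}]}).

Definition cmev h (m : cmonom V) : xtpoly := \prod_(v <- finsupp m) h v ^+ m v.

Lemma cmevEw h (d : {fset V}) (m : cmonom V) : (finsupp m `<=` d)%fset ->
  cmev h m = \prod_(v <- d) h v ^+ m v.
Proof.
move=> le; rewrite /cmev (big_fset_incl _ le) //.
by move=> i _; rewrite -cmE_neq0 negbK => /eqP ->; rewrite expr0.
Qed.

Lemma cmev_mmorphism h : mmorphism (cmev h).
Proof.
split; last by rewrite /cmev mdom1 big_seq_fset0.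
move=> m1 m2 /=; rewrite (cmevEw h (fsubsetUl (finsupp m1) (finsupp m2))).
rewrite (cmevEw h (fsubsetUr (finsupp m1) (finsupp m2))).
rewrite (cmevEw h (d := (finsupp m1 `|` finsupp m2)%fset)); last by rewrite mdomD.
by rewrite -big_split /=; apply: eq_bigr => i _; rewrite cmM exprD.
Qed.

HB.instance Definition _ h :=
  isMultiplicative.Build (cmonom V) xtpoly (cmev h) (cmev_mmorphism h).

Lemma msubstE h : msubst h = mmap (@malgC (cmonom var) int) (cmev h).
Proof. by []. Qed.

Lemma msubst0 h : msubst h 0 = 0.
Proof. by rewrite msubstE rmorph0. Qed.

Lemma msubstD h : {morph msubst h : x y / x + y}.
Proof. by move=> x y; rewrite msubstE rmorphD. Qed.

Lemma msubstB h : {morph msubst h : x y / x - y}.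
Proof. by move=> x y; rewrite msubstE rmorphB. Qed.

Lemma msubstM h : {morph msubst h : x y / x * y}.
Proof. by move=> x y; rewrite msubstE rmorphM. Qed.

Lemma msubstC h c : msubst h c%:MP = c%:MP.
Proof. by rewrite msubstE mmapC. Qed.

Lemma msubstU h v : msubst h << @ucm V v >> = h v.
Proof.
rewrite msubstE mmapU; change ((1 : int)%:MP * cmev h (ucm v) = h v).
rewrite mpolyC1E mul1r.
by rewrite /cmev mdomU big_seq_fset1 cmUU expr1.
Qed.

Lemma eq_msubst h1 h2 p : h1 =1 h2 -> msubst h1 p = msubst h2 p.
Proof.
move=> eh.
have e : cmev h1 =1 cmev h2 by move=> m; apply: eq_bigr => v _; rewrite eh.
rewrite /msubst; refine (eq_bigr _ _) => m _.
exact: (congr1 (fun z => (p@_m)%:MP * z) (e m)).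
Qed.

Lemma msubst_sum h (I : Type) (r : seq I) (P : pred I)
    (F : I -> {malg int[{cmonom V}]}) :
  msubst h (\sum_(i <- r | P i) F i) = \sum_(i <- r | P i) msubst h (F i).
Proof. by rewrite msubstE rmorph_sum. Qed.

Lemma msubst_prod h (I : Type) (r : seq I) (P : pred I)
    (F : I -> {malg int[{cmonom V}]}) :
  msubst h (\prod_(i <- r | P i) F i) = \prod_(i <- r | P i) msubst h (F i).
Proof. by rewrite msubstE rmorph_prod. Qed.

Lemma msubstXn h p k : msubst h (p ^+ k) = msubst h p ^+ k.
Proof. by rewrite msubstE rmorphXn. Qed.

End Substitution.

Lemma msubst_comp {V : choiceType} (g : var -> xtpoly) (h : V -> xtpoly)
    (p : {malg int[{cmonom V}]}) :
  msubst g (msubst h p) = msubst (fun v => msubst g (h v)) p.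
Proof.
have -> : msubst h p = \sum_(m <- msupp p) (p@_m)%:MP * cmev h m by [].
rewrite msubst_sum; refine (eq_bigr _ _) => m _.
have E : msubst g (cmev h m) = cmev (fun v => msubst g (h v)) m.
  by rewrite /cmev msubst_prod; refine (eq_bigr _ _) => v _; exact: msubstXn.
rewrite msubstM msubstC.
exact: (congr1 (fun z => (p@_m)%:MP * z) E).
Qed.

(** * Graham positivity *)

Lemma graham_positive0 : graham_positive 0.
Proof. by exists 0; split => [m|]; rewrite ?mcoeff0 ?msubst0. Qed.

Lemma graham_positiveC (c : int) : 0 <= c -> graham_positive c%:MP.
Proof.
move=> c0; exists c%:MP; split => [m|]; last exact: msubstC.
by rewrite mcoeffC mulrn_wge0.
Qed.

Lemma graham_positive1 : graham_positive 1.
Proof. by rewrite -mpolyC1E; apply: graham_positiveC. Qed.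

Lemma graham_positiveD f g :
  graham_positive f -> graham_positive g -> graham_positive (f + g).
Proof.
move=> [q1 [q1p <-]] [q2 [q2p <-]]; exists (q1 + q2); split; last exact: msubstD.
by move=> m; rewrite mcoeffD addr_ge0.
Qed.

Lemma graham_positiveM f g :
  graham_positive f -> graham_positive g -> graham_positive (f * g).
Proof.
move=> [q1 [q1p <-]] [q2 [q2p <-]]; exists (q1 * q2); split; last exact: msubstM.
move=> m; rewrite mcoeffMl; apply: sumr_ge0 => k1 _; apply: sumr_ge0 => k2 _.
by rewrite mulrn_wge0 // mulr_ge0.
Qed.

Lemma graham_positive_tstep k : graham_positive (T k.+1 - T k).
Proof.
exists << @ucm nat k >>; split => [m|]; first by rewrite mcoeffU1 ler0n.
by rewrite msubstU.
Qed.

Lemma graham_positive_tdiff a b : (a <= b)%N -> graham_positive (T b - T a).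
Proof.
elim: b => [|b IH].
  by rewrite leqn0 => /eqP ->; rewrite subrr; apply: graham_positive0.
rewrite leq_eqVlt => /orP [/eqP ->|]; first by rewrite subrr; apply: graham_positive0.
rewrite ltnS => /IH H.
have -> : T b.+1 - T a = (T b.+1 - T b) + (T b - T a) by rewrite addrA subrK.
exact: graham_positiveD (graham_positive_tstep b) H.
Qed.

Lemma graham_positive_msubst (V : choiceType) (h : V -> xtpoly)
    (q : {malg int[{cmonom V}]}) :
  (forall m, 0 <= q@_m) -> (forall v, graham_positive (h v)) ->
  graham_positive (msubst h q).
Proof.
move=> qp hp; apply: (big_ind graham_positive graham_positive0 graham_positiveD) => m _.
apply: graham_positiveM; first exact: graham_positiveC.
apply: (big_ind graham_positive graham_positive1 graham_positiveM) => v _.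
elim: (m v) => [|k IH]; first exact: graham_positive1.
by rewrite exprS; apply: graham_positiveM.
Qed.

Definition retime (beta : nat -> nat) (v : var) : xtpoly :=
  match v with inl j => X j | inr j => T (beta j) end.

Lemma graham_positive_retime (beta : nat -> nat) f :
  {homo beta : j k / (j <= k)%N} -> graham_positive f ->
  graham_positive (msubst (retime beta) f).
Proof.
move=> beta_mono [q [qp <-]]; rewrite msubst_comp; apply: graham_positive_msubst => // k.
have -> : msubst (retime beta) (T k.+1 - T k) = T (beta k.+1) - T (beta k).
  by rewrite msubstB; congr (_ - _); exact: msubstU.
exact/graham_positive_tdiff/beta_mono.
Qed.

(** * Evaluating the x-variables at t-points *)

Definition ev_at (c : nat -> nat) : xtpoly -> xtpoly :=
  msubst (fun v : var => match v with inl j => T (c j) | inr j => T j end).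

Lemma ev_atX c j : ev_at c (X j) = T (c j).
Proof. exact: msubstU. Qed.

Lemma ev_atT c j : ev_at c (T j) = T j.
Proof. exact: msubstU. Qed.

Lemma ev_atB c : {morph ev_at c : f g / f - g}.
Proof. exact: msubstB. Qed.

Lemma ev_atM c : {morph ev_at c : f g / f * g}.
Proof. exact: msubstM. Qed.

Lemma eq_ev_at c1 c2 f : c1 =1 c2 -> ev_at c1 f = ev_at c2 f.
Proof. by move=> c12; apply: eq_msubst => -[j|j]; rewrite /= ?c12. Qed.

Lemma ev_at_id f : ev_at id f = at_tt f.
Proof. by apply: eq_msubst => -[j|j]. Qed.

Lemma ev_at_Rp c i f : ev_at c (Rp i f) = ev_at (ins c i.+1 i) f.
Proof.
apply: etrans (msubst_comp _ _ f) _; apply: eq_msubst => -[j|j]; last exact: ev_atT.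
rewrite /ins ltnS; case: ifP => _; first exact: ev_atX.
by case: ifP => _; [exact: ev_atT | exact: ev_atX].
Qed.

Lemma ev_at_Rm c i f : ev_at c (Rm i f) = ev_at (ins c i i) f.
Proof.
apply: etrans (msubst_comp _ _ f) _; apply: eq_msubst => -[j|j]; last exact: ev_atT.
rewrite /ins; case: ifP => _; first exact: ev_atX.
by case: ifP => _; [exact: ev_atT | exact: ev_atX].
Qed.

Lemma ev_at_hat_t c i g :
  ev_at (bump i \o c) (hat_t i g) = msubst (retime (bump i)) (ev_at c g).
Proof.
apply: etrans (msubst_comp _ _ g) (esym (etrans (msubst_comp _ _ g) _)).
apply: eq_msubst => -[j|j].
- by transitivity (T (bump i (c j))); [|symmetry]; exact: msubstU.
- transitivity (T (bump i j)); first exact: msubstU.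
  by rewrite bumpE; case: ifP => _; symmetry; exact: msubstU.
Qed.

(** * Graham positivity of noncrossing evaluations *)

Section DoubleForestPolynomials.
Variable P : forest -> xtpoly.
Hypothesis hP : is_double_forest_family P.

Definition divdiff (F : forest) (i : nat) : xtpoly :=
  if i \in Qdes F then hat_t i (P (contract F i)) else 0.

Lemma ev_at_divdiff c i F :
  ev_at (ins c i.+1 i) (P F) - ev_at (ins c i i) (P F) =
  (T (c i) - T i) * ev_at c (divdiff F i).
Proof.
case: hP => _ _ /(_ F i); rewrite /E_is => E.
rewrite -ev_at_Rp -ev_at_Rm -ev_atB -E ev_atM ev_atB.
by congr ((_ - _) * _); [exact: ev_atX | exact: ev_atT].
Qed.

Lemma ev_at_isolate_step s i F : s i.+1 = i ->
  ev_at s (P F) = ev_at (s \o adjswap i) (P F)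
                  + (T (s i) - T i) * ev_at (s \o bump i.+1) (divdiff F i).
Proof.
move=> si1; have := ev_at_divdiff (s \o bump i.+1) i F.
rewrite (eq_ev_at _ (ins_bump si1)) (eq_ev_at _ (ins_bump_adjswapl si1)) /= bumpE ltnSn.
by move=> <-; rewrite addrC subrK.
Qed.

Lemma ev_at_join_step s i F : s i = i ->
  ev_at s (P F) = ev_at (s \o adjswap i) (P F)
                  + (T i - T (s i.+1)) * ev_at (s \o bump i) (divdiff F i).
Proof.
move=> sii; have := ev_at_divdiff (s \o bump i) i F.
rewrite (eq_ev_at _ (ins_bump_adjswapr sii)) (eq_ev_at _ (ins_bump sii)) /= bumpE ltnn.
by move=> E; rewrite -opprB mulNr -E opprB addrC subrK.
Qed.

Lemma graham_positive_ev_divdiff n e s i F c :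
  (forall e' s', nc_structure n.-1 e' s' ->
     forall F', graham_positive (ev_at s' (P F'))) ->
  nc_structure n e s -> (i < n)%N -> c =1 bump i \o delete_perm i s ->
  graham_positive (ev_at c (divdiff F i)).
Proof.
move=> IHn H lt_in ec; rewrite /divdiff; case: ifP => _; last first.
  by rewrite /ev_at msubst0; exact: graham_positive0.
rewrite (eq_ev_at _ ec) ev_at_hat_t; apply: graham_positive_retime.
  by move=> j k; rewrite leq_bump2.
exact: IHn (nc_structure_delete H lt_in) _.
Qed.

Theorem graham_positive_ev_at n e s :
  nc_structure n e s -> forall F, graham_positive (ev_at s (P F)).
Proof.
elim/ltn_ind: n e s => n IHn e s.
have [k] := ubnP (n * (n * n) - mu n s)%N; elim: k e s => // k IHk e s lt_k H F.
case: (boolP [forall x : 'I_n, s x == x]) => [/forallP s_id | /forallPn [x sx]].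
  have s_id' : s =1 id.
    move=> j; case: (ltnP j n) => jn; last exact: (ncs_fix H jn).
    exact/eqP/(s_id (Ordinal jn)).
  rewrite (eq_ev_at _ s_id') ev_at_id; case: hP => _ -> _.
  by case: ifP => _; [exact: graham_positive1 | exact: graham_positive0].
have [i [i1n step]] := ncs_adjacent_descent H (ex_intro _ (val x) sx).
have IH_del e' s' :
    nc_structure n.-1 e' s' -> forall F', graham_positive (ev_at s' (P F')).
  by apply: IHn; lia.
have IH_swap e' : nc_structure n e' (s \o adjswap i) -> (s i.+1 < s i)%N ->
    forall F', graham_positive (ev_at (s \o adjswap i) (P F')).
  move=> H' lt_s; have := mu_adjswap i1n lt_s; have := mu_bound H'.
  by move=> ? ?; apply: IHk H'; lia.
have s_inj := ncs_inj H.
case: step => [[si1 isi] | [sii si1]].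
- rewrite (ev_at_isolate_step F si1); apply: graham_positiveD.
    by apply: (IH_swap _ (nc_structure_isolate H i1n si1 isi)); lia.
  apply: graham_positiveM; first exact/graham_positive_tdiff/ltnW.
  apply: (graham_positive_ev_divdiff F IH_del H); first lia.
  by move=> j; rewrite (bump_delete_perm _ s_inj j) (bypass_bump_pred s_inj si1 j).
- rewrite (ev_at_join_step F sii); apply: graham_positiveD.
    by apply: (IH_swap _ (nc_structure_join H i1n sii si1)); lia.
  apply: graham_positiveM; first exact/graham_positive_tdiff/ltnW.
  apply: (graham_positive_ev_divdiff F IH_del H); first lia.
  by move=> j; rewrite (bump_delete_perm _ s_inj j) (bypass_bump_fixed s_inj sii j).
Qed.

End DoubleForestPolynomials.

Theorem corollary8p13 :
  forall P : forest -> xtpoly, is_double_forest_family P ->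
  forall (F : forest) (n : nat) (s : {perm 'I_n}),
    noncrossing_perm s -> graham_positive (ev s (P F)).
Proof.
move=> P hP F n s [Q [hQ hnc hs]].
exact: (graham_positive_ev_at hP (nc_structure_ncperm hQ hnc hs) F).
Qed.
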